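(* Let $n\ge2$ and let $Q\in\mathcal{Q}_n$ be meet-irreducible in $(\mathcal{Q}_n,\le)$; write $Q=Q(w)$ with $w\in S_n$. Then $Q$ is associative, i.e. $Q(i,Q(j,k))=Q(Q(i,j),k)$ for all $i,j,k\in L_n$, if and only if $w$ is a simple transposition $s_j$ (interchanging $j$ and $j+1$) for some $j\in[n-1]$.
   Context: Fix $n\ge2$, $L_n=\{0,\dots,n\}$. $\mathcal{Q}_n$ is the set of irreducible discrete quasi-copulas: maps $Q:L_n\times L_n\to L_n$ (onto) with $Q(i,0)=Q(0,i)=0$, $Q(i,n)=Q(n,i)=i$, non-decreasing in each argument, and $Q(i,j)+Q(i',j')\ge Q(i,j')+Q(i',j)$ whenever $i\le i'$, $j\le j'$ and one of $i,i',j,j'$ lies in $\{0,n\}$; it is ordered by $P\le Q$ iff $P(i,j)\le Q(i,j)$ for all $i,j$. An element $z$ of a finite poset is meet-irreducible if it is not the maximum and $z=x\wedge y$ implies $z=x$ or $z=y$. It is known that every meet-irreducible element of $\mathcal{Q}_n$ is of the form $Q(w)$, $w\in S_n$, where $Q(w)(r,s)=|\{i\le r: w(i)\le s\}|$ (and $0$ if $r=0$ or $s=0$). *)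

From mathcomp Require Import all_boot all_order all_fingroup.
Set Implicit Arguments. Unset Strict Implicit. Unset Printing Implicit Defensive.

Definition Ln (n : nat) := 'I_n.+1.

Definition qmap (n : nat) := {ffun Ln n * Ln n -> Ln n}.

Definition qv n (Q : qmap n) (i j : Ln n) : nat := nat_of_ord (Q (i, j)).

Definition is_bd n (i : Ln n) : bool := (i == 0 :> nat) || (i == n :> nat).

(* Q is an (irreducible) discrete quasi-copula, i.e. Q belongs to \mathcal{Q}_n *)
Definition is_dqc n (Q : qmap n) : Prop :=
  [/\ (forall y : Ln n, exists p, Q p = y),
      (forall i : Ln n, qv Q i ord0 = 0 /\ qv Q ord0 i = 0),
      (forall i : Ln n, qv Q i ord_max = i /\ qv Q ord_max i = i),
      (forall i i' j : Ln n, i <= i' -> qv Q i j <= qv Q i' j /\ qv Q j i <= qv Q j i') &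
      (forall i i' j j' : Ln n, i <= i' -> j <= j' ->
         [|| is_bd i, is_bd i', is_bd j | is_bd j'] ->
         qv Q i j' + qv Q i' j <= qv Q i j + qv Q i' j')].

Definition qle n (P Q : qmap n) : Prop := forall i j : Ln n, qv P i j <= qv Q i j.

Definition is_meet n (z x y : qmap n) : Prop :=
  [/\ is_dqc z, qle z x, qle z y &
      forall u, is_dqc u -> qle u x -> qle u y -> qle u z].

Definition is_maximum n (z : qmap n) : Prop :=
  is_dqc z /\ forall x, is_dqc x -> qle x z.

Definition meet_irreducible n (z : qmap n) : Prop :=
  [/\ is_dqc z, ~ is_maximum z &
      forall x y, is_dqc x -> is_dqc y -> is_meet z x y -> z = x \/ z = y].

(* Q(w) for w in S_n; S_n acts on 'I_n, where k : 'I_n stands for k+1 in [n]: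
   Q(w)(r,s) = |{ i <= r : w(i) <= s }| *)
Definition Qw n (w : 'S_n) : qmap n :=
  [ffun p : Ln n * Ln n =>
     inord #|[set k : 'I_n | (k < p.1) && (w k < p.2)]|].

Definition qassoc n (Q : qmap n) : Prop :=
  forall i j k : Ln n, Q (i, Q (j, k)) = Q (Q (i, j), k).

(* w is a simple transposition s_j, j in [n-1], swapping j and j+1; in the 0-based
   encoding this swaps (j-1) and j, i.e. a and a+1 with a.+1 < n *)
Definition is_simple_transposition n (w : 'S_n) : Prop :=
  exists (a : 'I_n) (Ha : a.+1 < n), w = tperm a (Ordinal Ha).

From mathcomp Require Import all_boot all_order all_fingroup.
From mathcomp Require Import zify.
Set Implicit Arguments. Unset Strict Implicit. Unset Printing Implicit Defensive.

(* Q(w) is the counting function qf w x y = #{k < x | w k < y} on [0,n]^2.  Such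
   functions are "grids": grounded, with Q(i,n) = Q(n,i) = i, and nondecreasing
   with unit steps in each variable; every grid is a discrete quasi-copula.
   At a "raisable" point (x,y) a grid can be increased by one and stays a grid,
   so two distinct raisable points present a grid as the meet of two strictly
   larger ones.  Hence a meet-irreducible Q(w) has at most one raisable point.
   Each descent p of w produces a raisable point in row p+1, and each descent of
   w^-1 one in column p+1; so w and w^-1 each have a single descent (w <> id,
   since Q(id) = min is the maximum).  Associativity forbids w from sending any
   k <= p+1 above p+1 (the descent being p); with the same constraint for w^-1,
   a short counting argument on the two increasing runs forces w = s_p.
   Conversely Q(s_a)(x,y) = min(x,y) except Q(a+1,a+1) = a, which is
   associative by case analysis. *)

Definition transpose (g : nat -> nat -> nat) : nat -> nat -> nat := fun i j => g j i.

Definition row_steps (N : nat) (g : nat -> nat -> nat) : Prop :=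
  (forall i, i <= N -> g i 0 = 0 /\ g i N = i) /\
  (forall i j, i < N -> j <= N -> g i j <= g i.+1 j <= (g i j).+1).

Definition grid (N : nat) (g : nat -> nat -> nat) : Prop :=
  row_steps N g /\ row_steps N (transpose g).

Lemma row_steps_ext N g h : (forall i j, g i j = h i j) -> row_steps N g -> row_steps N h.
Proof. by move=> E [H1 H2]; split=> [i|i j]; rewrite -!E; [exact: H1 | exact: H2]. Qed.

Lemma row_spread N g : row_steps N g -> forall i i' j, i <= i' -> i' <= N -> j <= N ->
  g i j <= g i' j /\ g i' j <= g i j + (i' - i).
Proof.
move=> [_ St] i i' j Hii' Hi' Hj; elim: i' Hii' Hi' => [|i' IH] Hii' Hi'.
  by move: Hii'; rewrite leqn0 => /eqP ->; lia.
have [->|Hne] := eqVneq i i'.+1; first lia.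
have [h1 h2] := IH ltac:(lia) ltac:(lia).
have /andP [h3 h4] := St i' j ltac:(lia) Hj; lia.
Qed.

Lemma grid_boundary N g i j : grid N g -> i <= N -> j <= N ->
  [/\ g i 0 = 0, g 0 j = 0, g i N = i & g N j = j].
Proof. by move=> [[B1 _] [B2 _]] Hi Hj; have [? ?] := B1 i Hi; have [? ?] := B2 j Hj. Qed.

Lemma grid_bounded N g i j : grid N g -> i <= N -> j <= N -> g i j <= N.
Proof.
move=> Hg Hi Hj; have [_ _ _ HN] := grid_boundary Hg Hi Hj.
by have [h _] := row_spread Hg.1 Hi (leqnn N) Hj; lia.
Qed.

Lemma grid_rect N g : grid N g -> forall i i' j j', i <= i' -> i' <= N -> j <= j' -> j' <= N ->
  [|| (i == 0) || (i == N), (i' == 0) || (i' == N), (j == 0) || (j == N) | (j' == 0) || (j' == N)] ->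
  g i j' + g i' j <= g i j + g i' j'.
Proof.
move=> Hg i i' j j' Hii Hi' Hjj Hj'.
have Hi : i <= N by lia. have Hj : j <= N by lia.
have [A B] := Hg.
have [m1 l1] := row_spread A Hii Hi' Hj.
have [m2 l2] := row_spread A Hii Hi' Hj'.
have [m3 l3] := row_spread B Hjj Hj' Hi.
have [m4 l4] := row_spread B Hjj Hj' Hi'.
rewrite /transpose in m3 l3 m4 l4.
have [f1 f2 f3 f4] := grid_boundary Hg Hi Hj.
have [f5 f6 f7 f8] := grid_boundary Hg Hi' Hj'.
have [f9 f10 f11 f12] := grid_boundary Hg Hi Hj'.
have [f13 f14 f15 f16] := grid_boundary Hg Hi' Hj.
by case/or4P=> /orP [] /eqP E; subst; lia.
Qed.

Definition qmap_of (N : nat) (g : nat -> nat -> nat) : qmap N :=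
  [ffun p : Ln N * Ln N => inord (g p.1 p.2)].

Lemma Ln_le N (i : Ln N) : i <= N.
Proof. by rewrite -ltnS ltn_ord. Qed.

Lemma qv_qmap_of N g : grid N g -> forall i j : Ln N, qv (qmap_of N g) i j = g i j.
Proof. by move=> Hg i j; rewrite /qv ffunE inordK // ltnS (grid_bounded Hg) ?Ln_le. Qed.

Lemma dqc_qmap_of N g : grid N g -> is_dqc (qmap_of N g).
Proof.
move=> Hg; split.
- move=> y; exists (y, ord_max); apply: val_inj.
  have [_ _ Ey _] := grid_boundary Hg (Ln_le y) (Ln_le y).
  by rewrite ffunE /= Ey inordK.
- by move=> i; rewrite !qv_qmap_of //; have [-> -> _ _] := grid_boundary Hg (Ln_le i) (Ln_le i).
- by move=> i; rewrite !qv_qmap_of //; have [_ _ -> ->] := grid_boundary Hg (Ln_le i) (Ln_le i).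
- move=> i i' j Hii; rewrite !qv_qmap_of //.
  have [h1 _] := row_spread Hg.1 Hii (Ln_le i') (Ln_le j).
  by have [h2 _] := row_spread Hg.2 Hii (Ln_le i') (Ln_le j).
- by move=> i i' j j' Hii Hjj Hb; rewrite !qv_qmap_of //; apply: (grid_rect Hg); rewrite ?Ln_le.
Qed.

Definition bump (g : nat -> nat -> nat) (x y : nat) : nat -> nat -> nat :=
  fun i j => if (i == x) && (j == y) then (g i j).+1 else g i j.

Definition step_at (g : nat -> nat -> nat) (x y : nat) : Prop :=
  g x.-1 y = g x y /\ g x.+1 y = (g x y).+1.

(* An interior point where g may be bumped without breaking the step
   conditions, in both directions. *)
Definition raisable (N : nat) (g : nat -> nat -> nat) (x y : nat) : Prop :=
  [/\ 0 < x < N, 0 < y < N, step_at g x y & step_at (transpose g) y x].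

Lemma row_steps_bump N g x y : row_steps N g -> 0 < x < N -> 0 < y < N -> step_at g x y ->
  row_steps N (bump g x y).
Proof.
move=> [B St] Hx Hy [S1 S2]; split=> [i Hi|i j Hi Hj]; rewrite /bump.
  have -> : (0 == y) = false by apply/eqP; lia.
  have -> : (N == y) = false by apply/eqP; lia.
  by rewrite !andbF; exact: B.
have := St i j Hi Hj.
have [Ex|Ex] := eqVneq i x; have [Ey|Ey] := eqVneq j y;
  have [Ex'|Ex'] := eqVneq i.+1 x; rewrite ?Ex ?Ey ?Ex' ?eqxx /=.
all: rewrite ?(negbTE Ex) ?(negbTE Ey) ?(negbTE Ex') /=; try lia.
all: by subst x; rewrite /= in S1; lia.
Qed.

Lemma grid_bump N g x y : grid N g -> raisable N g x y -> grid N (bump g x y).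
Proof.
move=> [A B] [Hx Hy S1 S2]; split; first exact: row_steps_bump.
by apply: row_steps_ext (row_steps_bump B Hy Hx S2) => i j; rewrite /transpose /bump andbC.
Qed.

(* A grid is the meet of its bumps at two distinct raisable points: any lower
   bound of both bumps agrees with g off one point and is below g at it. *)
Lemma qmap_of_meet_bumps N g x1 y1 x2 y2 : grid N g ->
  raisable N g x1 y1 -> raisable N g x2 y2 -> (x1, y1) != (x2, y2) ->
  is_meet (qmap_of N g) (qmap_of N (bump g x1 y1)) (qmap_of N (bump g x2 y2)).
Proof.
move=> Hg R1 R2 Hne; have G1 := grid_bump Hg R1; have G2 := grid_bump Hg R2.
split; first exact: dqc_qmap_of.
- by move=> i j; rewrite !qv_qmap_of // /bump; case: ifP.
- by move=> i j; rewrite !qv_qmap_of // /bump; case: ifP.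
move=> u _ h1 h2 i j; move: (h1 i j) (h2 i j); rewrite !qv_qmap_of // /bump.
case: ifP => [/andP [/eqP e1 /eqP e2]|_] //; case: ifP => [/andP [/eqP e3 /eqP e4]|_] //.
by move: Hne; rewrite -e1 -e2 -e3 -e4 eqxx.
Qed.

Lemma qmap_of_bump_neq N g x y : grid N g -> raisable N g x y ->
  qmap_of N g <> qmap_of N (bump g x y).
Proof.
move=> Hg R E; have [/andP [_ Hx] /andP [_ Hy] _ _] := R.
have := f_equal (fun Q => qv Q (inord x) (inord y)) E.
have hx : x < N.+1 by lia. have hy : y < N.+1 by lia.
rewrite /= !qv_qmap_of //; last exact: grid_bump.
by rewrite /bump !inordK // !eqxx /=; lia.
Qed.

Lemma raisable_unique N g x1 y1 x2 y2 : meet_irreducible (qmap_of N g) -> grid N g ->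
  raisable N g x1 y1 -> raisable N g x2 y2 -> x1 = x2 /\ y1 = y2.
Proof.
move=> [_ _ Hmi] Hg R1 R2.
have [[-> ->] //|Hne] := eqVneq (x1, y1) (x2, y2).
have Hm := qmap_of_meet_bumps Hg R1 R2 Hne.
have [|] := Hmi _ _ (dqc_qmap_of (grid_bump Hg R1)) (dqc_qmap_of (grid_bump Hg R2)) Hm.
  by move/(qmap_of_bump_neq Hg R1).
by move/(qmap_of_bump_neq Hg R2).
Qed.

Lemma incr_spread (h : nat -> nat) a b : (forall k, a <= k -> k < b -> h k < h k.+1) ->
  forall k l, a <= k -> k <= l -> l <= b -> h k + (l - k) <= h l.
Proof.
move=> H k l Hak; elim: l => [|l IH] Hkl Hlb.
  by move: Hkl; rewrite leqn0 => /eqP ->; rewrite addn0.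
have [->|Hne] := eqVneq k l.+1; first by rewrite subnn addn0.
by have := IH ltac:(lia) ltac:(lia); have := H l ltac:(lia) Hlb; lia.
Qed.

Lemma no_injection_into_smaller (h : nat -> nat) n :
  (forall k l, k <= n -> l <= n -> h k = h l -> k = l) -> (forall k, k <= n -> h k < n) -> False.
Proof.
move=> Hinj Hlt.
have U : uniq [seq h k | k <- iota 0 n.+1].
  rewrite map_inj_in_uniq ?iota_uniq // => k l; rewrite !mem_iota /= !add0n !ltnS; exact: Hinj.
have S : {subset [seq h k | k <- iota 0 n.+1] <= iota 0 n}.
  by move=> v /mapP [k]; rewrite !mem_iota /= !add0n ltnS => hk ->; apply: Hlt.
by have := uniq_leq_size U S; rewrite size_map !size_iota; lia.
Qed.

Definition descent (f : nat -> nat) (m p : nat) : Prop := p < m /\ f p.+1 < f p.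

Definition single_descent (f : nat -> nat) (m p : nat) : Prop :=
  descent f m p /\ forall k, k < m -> k <> p -> f k < f k.+1.

Section PermutationGrid.

Variable m : nat.
Implicit Type w : 'S_m.+1.

(* The permutation w read as a function on nat (indices beyond m
   are read as 0). *)
Definition fw w (k : nat) : nat := w (inord k).

Definition qf w (x y : nat) : nat := \sum_(k < m.+1) ((k < x) && (w k < y)).

Lemma fwE w (i : 'I_m.+1) : fw w i = w i.
Proof. by rewrite /fw inord_val. Qed.

Lemma fw_lt w k : fw w k < m.+1.
Proof. exact: ltn_ord. Qed.

Lemma fwK w k : k < m.+1 -> fw w^-1 (fw w k) = k.
Proof. by move=> Hk; rewrite /fw inord_val permK inordK. Qed.

Lemma fwVK w k : k < m.+1 -> fw w (fw w^-1 k) = k.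
Proof. by move=> Hk; rewrite /fw inord_val permKV inordK. Qed.

Lemma fw_inj w x y : x < m.+1 -> y < m.+1 -> fw w x = fw w y -> x = y.
Proof. by move=> Hx Hy E; rewrite -(fwK w Hx) -(fwK w Hy) E. Qed.

Lemma qf0 w y : qf w 0 y = 0.
Proof. by rewrite /qf big1. Qed.

Lemma qfS w x y : x < m.+1 -> qf w x.+1 y = qf w x y + (fw w x < y).
Proof.
move=> Hx; rewrite /qf.
rewrite (eq_bigr (fun k : 'I_m.+1 => ((k < x) && (w k < y)) + ((k == x :> nat) && (w k < y)))); last first.
  by move=> k _; rewrite ltnS leq_eqVlt; case: (ltngtP k x) => //= _; case: (_ < y).
rewrite big_split /=; congr (_ + _).
rewrite (bigD1 (inord x)) //= inordK // eqxx /= big1 ?addn0 //.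
move=> k /eqP Hk; case E: (k == x :> nat) => //=.
by case: Hk; apply: val_inj; rewrite /= inordK // (eqP E).
Qed.

Lemma qfT w x y : qf w x y = qf w^-1 y x.
Proof.
rewrite /qf (reindex_inj (h := (w^-1)%g) (@perm_inj _ _)) /=.
by apply: eq_bigr => k _; rewrite permKV andbC.
Qed.

Lemma row_steps_qf w : row_steps m.+1 (qf w).
Proof.
split=> [i Hi|i j Hi Hj]; last by rewrite qfS //; case: (_ < j); lia.
split; first by rewrite /qf big1 // => k _; rewrite ltn0 andbF.
elim: i Hi => [|i IH] Hi; first by rewrite qf0.
by rewrite qfS // IH ?(ltnW Hi) // fw_lt addn1.
Qed.

Lemma grid_qf w : grid m.+1 (qf w).
Proof.
split; first exact: row_steps_qf.
by apply: row_steps_ext (row_steps_qf w^-1) => i j; rewrite /transpose qfT invgK.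
Qed.

Lemma Qw_qmap_of w : Qw w = qmap_of m.+1 (qf w).
Proof.
apply/ffunP => p; rewrite !ffunE -sum1_card big_mkcond; congr inord.
by apply: eq_bigr => i _; rewrite inE; case: (_ && _).
Qed.

Lemma val_Qw w (a b : Ln m.+1) : val (Qw w (a, b)) = qf w a b.
Proof. by rewrite Qw_qmap_of; apply: (qv_qmap_of (grid_qf w)). Qed.

Lemma qassoc_inv w : qassoc (Qw w) -> qassoc (Qw w^-1).
Proof.
have QT (a b : Ln m.+1) : Qw w^-1 (a, b) = Qw w (b, a).
  by apply: val_inj; rewrite !val_Qw qfT invgK.
by move=> H i j k; rewrite !QT H.
Qed.

(* A descent p of w yields a raisable point in row p+1: its column y is the
   largest value in (w(p+1), w(p)] whose predecessor occurs after position p. *)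
Lemma descent_raisable w p : descent (fw w) m p -> exists y, raisable m.+1 (qf w) p.+1 y.
Proof.
move=> [Hp Hd]; set f := fw w; set g := fw (w^-1)%g.
pose P y := [&& f p.+1 < y, y <= f p & p < g y.-1].
have exP : exists y, P y.
  by exists (f p.+1).+1; rewrite /P ltnSn Hd /= /g /f fwK //; lia.
have ubP y : P y -> y <= f p by case/and3P.
have [y /and3P [h1 h2 h3] hmax] := ex_maxnP exP ubP.
have hfp : f p < m.+1 by apply: fw_lt.
have hgy : g y < p.+1.
  have [Ey|Ey] := eqVneq y (f p); first by rewrite Ey /g /f fwK //; lia.
  rewrite ltnNge; apply/negP => hc.
  have : P y.+1 by apply/and3P; split=> /=; lia.
  by move/hmax; lia.
have fpy : (f p < y) = false by apply/negbTE; rewrite -leqNgt.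
have gy1 : (g y.-1 < p.+1) = false by apply/negbTE; rewrite -leqNgt.
have Ey : y = y.-1.+1 by lia.
exists y; split.
- by apply/andP; split; lia.
- by apply/andP; split; lia.
- by rewrite /step_at /= !qfS -/f ?fpy ?h1 /=; lia.
- rewrite /step_at /transpose !(qfT w p.+1) qfS -/g ?hgy; last lia.
  split; last by rewrite addn1.
  by rewrite {2}Ey qfS -/g ?gy1 ?addn0 //; lia.
Qed.

Lemma raisable_inv w x y : raisable m.+1 (qf (w^-1)%g) x y -> raisable m.+1 (qf w) y x.
Proof. by case=> Hx Hy S1 S2; split; rewrite // /step_at /transpose !(qfT w). Qed.

Lemma descent_unique w p q : meet_irreducible (Qw w) ->
  descent (fw w) m p -> descent (fw w) m q -> p = q.
Proof.
rewrite Qw_qmap_of => Hmi /descent_raisable [y1 R1] /descent_raisable [y2 R2].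
by have [[]] := raisable_unique Hmi (grid_qf w) R1 R2.
Qed.

Lemma inv_descent_unique w p q : meet_irreducible (Qw w) ->
  descent (fw (w^-1)%g) m p -> descent (fw (w^-1)%g) m q -> p = q.
Proof.
rewrite Qw_qmap_of => Hmi /descent_raisable [y1 /raisable_inv R1] /descent_raisable [y2 /raisable_inv R2].
by have [_ []] := raisable_unique Hmi (grid_qf w) R1 R2.
Qed.

Lemma ascent_of_not_descent w k : k < m -> ~ descent (fw w) m k -> fw w k < fw w k.+1.
Proof.
move=> Hk Hnd; case: ltngtP => // [Hd|E]; first by case: Hnd.
by have := fw_inj (w := w) (x := k) (y := k.+1) ltac:(lia) ltac:(lia) E; lia.
Qed.

Lemma identity_of_no_descent w : (forall p, ~ descent (fw w) m p) -> w = 1%g.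
Proof.
move=> Hno; have asc k : 0 <= k -> k < m -> fw w k < fw w k.+1.
  by move=> _ Hk; apply: ascent_of_not_descent.
apply/permP => i; apply: val_inj; rewrite /= perm1 -fwE.
have hi : (i : nat) <= m by rewrite -ltnS ltn_ord.
have := incr_spread asc (leq0n 0) (leq0n i) hi.
have := incr_spread asc (leq0n i) hi (leqnn m).
by have := fw_lt w m; lia.
Qed.

Lemma single_descent_of_unique w : w <> 1%g ->
  (forall p q, descent (fw w) m p -> descent (fw w) m q -> p = q) ->
  exists p, single_descent (fw w) m p.
Proof.
move=> Hw1 Huniq.
have [p Dp] : exists p, descent (fw w) m p.
  have [/existsP [p Hp]|/existsPn Hno] := boolP [exists p : 'I_m, fw w p.+1 < fw w p].
    by exists p.
  case: Hw1; apply: identity_of_no_descent => p [Hp Hd].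
  by have := Hno (Ordinal Hp); rewrite Hd.
exists p; split=> // k Hk Hkp; apply: ascent_of_not_descent => // Dk.
by apply: Hkp; apply: Huniq.
Qed.

(* The obstruction to associativity: if w(j) < w(k) for all k > j, then an
   associative Q(w) keeps w(k) <= j for all k <= j.  Otherwise, with
   t = w(j)+1, one finds Q(j+1,t) = t and Q(j+1,j+1) <= j, whence
   Q(j+1, Q(j+1,t)) = t > t - 1 = Q(j,t) >= Q(Q(j+1,j+1), t). *)
Lemma qassoc_closed w j : qassoc (Qw w) -> j <= m ->
  (forall k, j < k -> k <= m -> fw w j < fw w k) -> forall k, k <= j -> fw w k <= j.
Proof.
move=> Ha Hj Hrl k Hkj; rewrite leqNgt; apply/negP => Hfk.
have [R C] := grid_qf w.
set t := (fw w j).+1.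
have Ht : t <= m.+1 by apply: fw_lt.
have Qa : qf w j.+1 t = t.
  rewrite qfT; suff : forall y, y <= t -> qf (w^-1)%g y j.+1 = y by apply.
  elim=> [|y IH] Hy; first by rewrite qf0.
  rewrite qfS; last lia.
  rewrite IH; last lia.
  case: (ltnP (fw (w^-1)%g y) j.+1) => [_|hc]; first by rewrite addn1.
  have := Hrl _ hc (fw_lt _ _); rewrite fwVK; lia.
have Qb : qf w j.+1 j.+1 <= j.
  have [_ l1] := row_spread R (i := k.+1) (i' := j.+1) (j := j.+1) ltac:(lia) ltac:(lia) ltac:(lia).
  have fkj : (fw w k < j.+1) = false by apply/negbTE; rewrite -leqNgt.
  rewrite (qfS w (x := k)) ?fkj in l1; last lia.
  have [l2 _] := row_spread C (i := j.+1) (i' := m.+1) (j := k) ltac:(lia) ltac:(lia) ltac:(lia).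
  have [_ _ top _] := grid_boundary (grid_qf w) (i := k) (j := k) ltac:(lia) ltac:(lia).
  rewrite /transpose top in l2.
  lia.
have Qc : qf w j.+1 t = qf w j t + 1 by rewrite qfS // /t ltnSn.
have := f_equal val (Ha (inord j.+1) (inord j.+1) (inord t)).
rewrite !val_Qw !inordK ?Qa //; try lia.
have [l3 _] := row_spread R (i := qf w j.+1 j.+1) (i' := j) (j := t) Qb ltac:(lia) Ht.
lia.
Qed.

End PermutationGrid.

Section SingleDescent.

Variables (m p : nat) (f g : nat -> nat).
Hypothesis f_le : forall k, f k <= m.
Hypothesis fK : forall k, k <= m -> g (f k) = k.
Hypothesis f_single : single_descent f m p.

Lemma f_inj k l : k <= m -> l <= m -> f k = f l -> k = l.
Proof. by move=> Hk Hl E; rewrite -(fK Hk) -(fK Hl) E. Qed.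

Lemma spread_low k l : k <= l -> l <= p -> f k + (l - k) <= f l.
Proof.
have [[Hp _] Hasc] := f_single.
by apply: (incr_spread (a := 0) (b := p)) => // i _ Hi; apply: Hasc; lia.
Qed.

Lemma spread_high k l : p < k -> k <= l -> l <= m -> f k + (l - k) <= f l.
Proof.
have [_ Hasc] := f_single => Hk.
by apply: (incr_spread (a := p.+1) (b := m)) => // i Hi Hi'; apply: Hasc; lia.
Qed.

Lemma ge_below_descent k : k <= p -> k <= f k.
Proof. by move=> Hk; have := spread_low (leq0n k) Hk; lia. Qed.

Lemma le_above_descent k : p < k -> k <= m -> f k <= k.
Proof. by move=> Hk Hkm; have := spread_high Hk Hkm (leqnn m); have := f_le m; lia. Qed.

Hypothesis f_closed : forall k, k <= p.+1 -> f k <= p.+1.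

(* If moreover f maps [0,p+1] into itself, then f p = p+1 (else [0,p+1] would
   inject into [0,p]). *)
Lemma descent_top : f p = p.+1.
Proof.
have [[Hp Hd] _] := f_single.
have Hfp := ge_below_descent (leqnn p); have := f_closed (leqnSn p).
case: (ltngtP (f p) p.+1) => // Hlt _; exfalso.
apply: (@no_injection_into_smaller f p.+1) => [k l Hk Hl|k Hk]; first by apply: f_inj; lia.
have [->|Hkp] := eqVneq k p.+1; first lia.
have [->|Hkp'] := eqVneq k p; first lia.
by have := spread_low (k := k) (l := p) ltac:(lia) (leqnn p); lia.
Qed.

End SingleDescent.

Lemma adjacent_transposition_of_descents m p c (f g : nat -> nat) :
  (forall k, f k <= m) -> (forall k, g k <= m) ->
  (forall k, k <= m -> g (f k) = k) -> (forall k, k <= m -> f (g k) = k) ->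
  single_descent f m p -> single_descent g m c ->
  (forall k, k <= p.+1 -> f k <= p.+1) -> (forall k, k <= c.+1 -> g k <= c.+1) ->
  forall i, i <= m -> f i = if i == p then p.+1 else if i == p.+1 then p else i.
Proof.
move=> f_le g_le fK gK Sf Sg Cf Cg.
have [[Hp _] _] := Sf; have [[Hc _] _] := Sg.
have fp : f p = p.+1 := descent_top fK Sf Cf.
have gc : g c = c.+1 := descent_top gK Sg Cg.
have gp1 : g p.+1 = p by rewrite -fp fK // ltnW.
have fc1 : f c.+1 = c by rewrite -gc gK // ltnW.
have Ecp : c = p.
  have := ge_below_descent Sg (k := p.+1); have := ge_below_descent Sf (k := c.+1).
  by rewrite gp1 fc1; lia.
subst c => i Hi; case: eqP => [->//|Hip]; case: eqP => [->//|Hip1].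
have [Hlt|Hgt] := ltnP i p.
  have := spread_low Sf (k := i) (l := p) (ltnW Hlt) (leqnn p).
  have fi_ne : f i <> p by rewrite -fc1 => /(f_inj fK); lia.
  have := ge_below_descent Sg (k := f i); rewrite fK; last lia.
  by have := ge_below_descent Sf (k := i); lia.
have := spread_high Sf (k := p.+1) (l := i) (ltnSn p) ltac:(lia) Hi.
have fi_ne : f i <> p.+1 by rewrite -fp => /(f_inj fK); lia.
have := le_above_descent g_le Sg (k := f i); rewrite fK //.
by have := le_above_descent f_le Sf (k := i); have := f_le i; lia.
Qed.

Section Transpositions.

Variable m : nat.
Implicit Type w : 'S_m.+1.

Lemma perm_eq_fw w w' : (forall i, i <= m -> fw w i = fw w' i) -> w = w'.
Proof. by move=> E; apply/permP => i; apply: val_inj; rewrite /= -!fwE E // -ltnS. Qed.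

Lemma fw_tperm (a b : 'I_m.+1) x : b = a.+1 :> nat -> x <= m ->
  fw (tperm a b) x = if x == a :> nat then a.+1 else if x == a.+1 then a : nat else x.
Proof.
move=> Hb Hx; have Hx' : x < m.+1 by [].
rewrite /fw; case: tpermP => [E|E|na nb].
- by have := f_equal val E; rewrite /= inordK // => ->; rewrite eqxx.
- have := f_equal val E; rewrite /= inordK // => ->; rewrite Hb eqxx.
  by have -> : (a.+1 == a) = false by apply/eqP; lia.
- rewrite /= inordK //.
  have -> : (x == a) = false by apply/eqP => e; apply: na; apply: val_inj; rewrite /= inordK.
  have -> // : (x == a.+1) = false.
  by apply/eqP => e; apply: nb; apply: val_inj; rewrite /= inordK // Hb.
Qed.

Definition swap_min (a x y : nat) : nat := if (x == a.+1) && (y == a.+1) then a else minn x y.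

Lemma qf_tperm (a b : 'I_m.+1) x y : b = a.+1 :> nat -> x <= m.+1 ->
  qf (tperm a b) x y = swap_min a x y.
Proof.
move=> Hb; elim: x => [|x IH] Hx; first by rewrite qf0 /swap_min /= min0n.
rewrite qfS // IH ?(ltnW Hx) // fw_tperm // /swap_min.
by do ! case: eqP => ? /=; lia.
Qed.

Lemma swap_min_assoc a i j k : swap_min a i (swap_min a j k) = swap_min a (swap_min a i j) k.
Proof. by rewrite /swap_min; do ! case: ifP; lia. Qed.

Lemma qassoc_simple_transposition w : is_simple_transposition w -> qassoc (Qw w).
Proof.
move=> [a [Ha ->]] i j k; apply: val_inj.
have E x y : x <= m.+1 -> qf (tperm a (Ordinal Ha)) x y = swap_min a x y.
  by move=> Hx; apply: qf_tperm.
rewrite !val_Qw !E ?Ln_le ?swap_min_assoc //.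
by have := Ln_le i; have := ltn_ord a; rewrite /swap_min; case: ifP; lia.
Qed.

Lemma qf_id x y : x <= m.+1 -> qf (1%g : 'S_m.+1) x y = minn x y.
Proof.
elim: x => [|x IH] Hx; first by rewrite qf0 min0n.
rewrite qfS // IH ?(ltnW Hx) // /fw perm1 inordK //.
by case: (ltnP x y) => h; lia.
Qed.

Lemma Qw_id_maximum : is_maximum (Qw (1%g : 'S_m.+1)).
Proof.
rewrite Qw_qmap_of; split=> [|u [_ _ Htop Hmon _] i j]; first exact/dqc_qmap_of/grid_qf.
rewrite qv_qmap_of; last exact: grid_qf.
rewrite qf_id ?leq_min; last exact: Ln_le.
have [_ h1] := Hmon j ord_max i (leq_ord j); have [h2 _] := Hmon i ord_max j (leq_ord i).
have [e1 _] := Htop i; have [_ e2] := Htop j.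
by rewrite /qv in h1 h2 e1 e2 *; apply/andP; split; lia.
Qed.

(* Associativity, applied at the second run of w, keeps [0,p+1] stable. *)
Lemma closed_below_descent w p : qassoc (Qw w) -> single_descent (fw w) m p ->
  forall k, k <= p.+1 -> fw w k <= p.+1.
Proof.
move=> Ha Sf; have [[Hp _] _] := Sf; apply: qassoc_closed Ha Hp _ => k Hk Hkm.
by have := spread_high Sf (ltnSn p) (ltnW Hk) Hkm; lia.
Qed.

Lemma simple_transposition_of_qassoc w : meet_irreducible (Qw w) -> qassoc (Qw w) ->
  is_simple_transposition w.
Proof.
move=> Hmi Ha.
have Hw1 : w <> 1%g by move=> E; case: Hmi => _ + _; rewrite E; apply; exact: Qw_id_maximum.
have Hw1' : (w^-1)%g <> 1%g by move=> E; apply: Hw1; rewrite -(invgK w) E invg1.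
have [p Sf] := single_descent_of_unique Hw1 (fun p q => descent_unique Hmi).
have [c Sg] := single_descent_of_unique Hw1' (fun p q => inv_descent_unique Hmi).
have [[Hp _] _] := Sf.
have Hp' : p < m.+1 by lia.
exists (Ordinal Hp'), Hp; apply: perm_eq_fw => i Hi; rewrite fw_tperm //=.
apply: (adjacent_transposition_of_descents (g := fw (w^-1)%g) _ _ _ _ Sf Sg) => //.
- by move=> k; rewrite -ltnS fw_lt.
- by move=> k; rewrite -ltnS fw_lt.
- by move=> k Hk; rewrite fwK.
- by move=> k Hk; rewrite fwVK.
- exact: closed_below_descent.
- exact: closed_below_descent (qassoc_inv Ha) Sg.
Qed.

End Transpositions.

Theorem mainTheorem8 (n : nat) (Hn : 2 <= n) (Q : qmap n) (w : 'S_n) :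
  meet_irreducible Q -> Q = Qw w ->
  (qassoc Q <-> is_simple_transposition w).
Proof.
case: n Hn Q w => [//|m] _ Q w Hmi EQ; subst Q; split.
- exact: simple_transposition_of_qassoc.
- exact: qassoc_simple_transposition.
Qed.
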